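(* Let $\Sigma\subset\mathbb G$ be a regular surface. At every non-characteristic point of $\Sigma$, the Riemannian mean curvature $\mathcal H_L$ of $\Sigma$ in $(\mathbb G,g_L)$ satisfies $$\lim_{L\to+\infty}\mathcal H_L=X_1(\bar p)+X_2(\bar q)-\bar p.$$
   Context: $\mathbb G=(0,\infty)\times\mathbb R^2$ is the affine group with coordinates $(x_1,x_2,x_3)$ and law $(a,b,c)\star(x,y,z)=(ax,ay+b,z+c)$. Let $X_1=x_1\partial_{x_1}$, $X_2=x_1\partial_{x_2}+\partial_{x_3}$, $X_3=x_1\partial_{x_2}$, with dual forms $\omega_1=x_1^{-1}dx_1$, $\omega_2=dx_3$, $\omega=x_1^{-1}dx_2-dx_3$. For $L>0$, $g_L=\omega_1\otimes\omega_1+\omega_2\otimes\omega_2+L\,\omega\otimes\omega$ (so $X_1,X_2,\widetilde X_3:=L^{-1/2}X_3$ is orthonormal) and $\nabla^L$ is its Levi-Civita connection. A regular surface is a Euclidean $C^2$-smooth compact oriented surface $\Sigma=\{u=0\}$ with $u:\mathbb G\to\mathbb R$ Euclidean $C^2$ and $(u_{x_1},u_{x_2},u_{x_3})\ne0$. Put $p=X_1u$, $q=X_2u$, $r=\widetilde X_3u$, $l=\sqrt{p^2+q^2}$, $l_L=\sqrt{p^2+q^2+r^2}$, $\bar p=p/l$, $\bar q=q/l$, $\bar p_L=p/l_L$, $\bar q_L=q/l_L$, $\bar r_L=r/l_L$. A point is non-characteristic if $l\ne0$. There, $v_L=\bar p_LX_1+\bar q_LX_2+\bar r_L\widetilde X_3$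 is the unit normal, and $e_1=\bar qX_1-\bar pX_2$, $e_2=\bar r_L\bar pX_1+\bar r_L\bar qX_2-\frac{l}{l_L}\widetilde X_3$ is an orthonormal tangent frame. The mean curvature is $\mathcal H_L=\langle\nabla^L_{e_1}v_L,e_1\rangle_L+\langle\nabla^L_{e_2}v_L,e_2\rangle_L$ (trace of the second fundamental form $(\langle\nabla^L_{e_i}v_L,e_j\rangle_L)_{i,j}$). *)

From HB Require Import structures.
From mathcomp Require Import all_boot all_order all_algebra.
From mathcomp Require Import all_classical all_reals all_analysis.
Set Implicit Arguments. Unset Strict Implicit. Unset Printing Implicit Defensive.
Import Order.TTheory GRing.Theory Num.Theory.
Import numFieldNormedType.Exports.
Local Open Scope classical_set_scope.
Local Open Scope ring_scope.

Section Defs.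
Variable R : realType.

Definition pt := (R * R * R)%type.
Definition x1 (x : pt) : R := x.1.1.
Definition x2 (x : pt) : R := x.1.2.
Definition x3 (x : pt) : R := x.2.

Definition G : set pt := [set x | 0 < x1 x].

(* Euclidean partial derivatives d/dx_{i+1}, i = 0,1,2 *)
Definition pd (i : nat) (f : pt -> R) (x : pt) : R :=
  match i with
  | 0 => derive1 (fun t => f (t, x2 x, x3 x)) (x1 x)
  | 1 => derive1 (fun t => f (x1 x, t, x3 x)) (x2 x)
  | _ => derive1 (fun t => f (x1 x, x2 x, t)) (x3 x)
  end.

Definition pd_exists (i : nat) (f : pt -> R) (x : pt) : Prop :=
  match i with
  | 0 => derivable (fun t => f (t, x2 x, x3 x)) (x1 x) 1
  | 1 => derivable (fun t => f (x1 x, t, x3 x)) (x2 x) 1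
  | _ => derivable (fun t => f (x1 x, x2 x, t)) (x3 x) 1
  end.

Definition C1_on (D : set pt) (f : pt -> R) : Prop :=
  forall x, D x -> {for x, continuous f} /\
    forall i : nat, (i < 3)%N -> pd_exists i f x /\ {for x, continuous (pd i f)}.

Definition C2_on (D : set pt) (f : pt -> R) : Prop :=
  C1_on D f /\ forall i : nat, (i < 3)%N -> C1_on D (pd i f).

(* vector fields: coordinate components w.r.t. d/dx1, d/dx2, d/dx3 *)
Definition vfield := pt -> nat -> R.

Definition vadd (V W : vfield) : vfield := fun x i => V x i + W x i.
Definition vscale (a : pt -> R) (V : vfield) : vfield := fun x i => a x * V x i.

Definition vder (V : vfield) (f : pt -> R) (x : pt) : R :=
  \sum_(i < 3) V x i * pd i f x.

Definition X1 : vfield := fun x i => match i with 0 => x1 x | _ => 0 end.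
Definition X2 : vfield :=
  fun x i => match i with 0 => 0 | 1 => x1 x | 2 => 1 | _ => 0 end.
Definition X3 : vfield := fun x i => match i with 1 => x1 x | _ => 0 end.
Definition X3t (L : R) : vfield := vscale (fun _ => (Num.sqrt L)^-1) X3.

(* covectors: omega1 = x1^-1 dx1, omega2 = dx3, omega = x1^-1 dx2 - dx3 *)
Definition om1 (x : pt) (i : nat) : R := match i with 0 => (x1 x)^-1 | _ => 0 end.
Definition om2 (x : pt) (i : nat) : R := match i with 2 => 1 | _ => 0 end.
Definition om (x : pt) (i : nat) : R :=
  match i with 1 => (x1 x)^-1 | 2 => -1 | _ => 0 end.

Definition gL (L : R) (x : pt) (i j : nat) : R :=
  om1 x i * om1 x j + om2 x i * om2 x j + L * (om x i * om x j).

Definition ginner (L : R) (x : pt) (v w : nat -> R) : R :=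
  \sum_(i < 3) \sum_(j < 3) gL L x i j * v i * w j.

Definition gmx (L : R) (x : pt) : 'M[R]_3 := \matrix_(i < 3, j < 3) gL L x i j.
Definition ginv (L : R) (x : pt) (k l : nat) : R :=
  let M := invmx (gmx L x) in
  match (insub k : option 'I_3), (insub l : option 'I_3) with
  | Some k', Some l' => M k' l'
  | _, _ => 0
  end.

Definition christoffel (L : R) (x : pt) (k i j : nat) : R :=
  2^-1 * \sum_(l < 3) ginv L x k l *
    (pd i (fun y => gL L y j l) x + pd j (fun y => gL L y i l) x
     - pd l (fun y => gL L y i j) x).

Definition nablaL (L : R) (V W : vfield) : vfield := fun x k =>
  \sum_(i < 3) V x i * pd i (fun y => W y k) x
  + \sum_(i < 3) \sum_(j < 3) christoffel L x k i j * V x i * W x j.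

Section Surface.
Variable u : pt -> R.
Variable L : R.

Definition pp : pt -> R := vder X1 u.
Definition qq : pt -> R := vder X2 u.
Definition rr : pt -> R := vder (X3t L) u.
Definition ll (x : pt) : R := Num.sqrt (pp x ^+ 2 + qq x ^+ 2).
Definition lL (x : pt) : R := Num.sqrt (pp x ^+ 2 + qq x ^+ 2 + rr x ^+ 2).
Definition pbar (x : pt) : R := pp x / ll x.
Definition qbar (x : pt) : R := qq x / ll x.
Definition pbarL (x : pt) : R := pp x / lL x.
Definition qbarL (x : pt) : R := qq x / lL x.
Definition rbarL (x : pt) : R := rr x / lL x.

Definition nuL : vfield :=
  vadd (vadd (vscale pbarL X1) (vscale qbarL X2)) (vscale rbarL (X3t L)).
Definition e1 : vfield := vadd (vscale qbar X1) (vscale (fun x => - pbar x) X2).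
Definition e2 : vfield :=
  vadd (vadd (vscale (fun x => rbarL x * pbar x) X1)
             (vscale (fun x => rbarL x * qbar x) X2))
       (vscale (fun x => - (ll x / lL x)) (X3t L)).

Definition meanH (x : pt) : R :=
  ginner L x (nablaL L e1 nuL x) (e1 x) + ginner L x (nablaL L e2 nuL x) (e2 x).
End Surface.

Definition surf (u : pt -> R) : set pt := [set x | G x /\ u x = 0].

Definition regular_surface (u : pt -> R) : Prop :=
  C2_on G u /\ compact (surf u) /\
  (forall x, surf u x -> exists i : nat, (i < 3)%N /\ pd i u x != 0).

End Defs.

From HB Require Import structures.
From mathcomp Require Import all_boot all_order all_algebra.
From mathcomp Require Import all_classical all_reals all_analysis.
From mathcomp Require Import ring lra.
Import Order.TTheory GRing.Theory Num.Theory.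
Import numFieldNormedType.Exports.
Local Open Scope classical_set_scope.
Local Open Scope ring_scope.

Set Implicit Arguments. Unset Strict Implicit. Unset Printing Implicit Defensive.
Arguments pd : simpl never.

(* In the left-invariant orthonormal frame (X1, X2, X3/sqrt L) of g_L, the mean curvature of the
   surface is the divergence of its unit normal nu_L = pbar_L X1 + qbar_L X2 + rbar_L X3/sqrt L:
   the normal term <nabla_nu nu, nu> vanishes because |nu| = 1 and the connection coefficients
   of an orthonormal frame are skew.  Since div X1 = -1 and div X2 = div X3 = 0 this gives
     H_L = X1(pbar_L) + X2(qbar_L) + s X3(rbar_L) - pbar_L,   s = 1/sqrt L.
   As r = s X3 u, the right-hand side is an expression in s alone, continuous at s = 0 because
   l_L stays away from 0 there, and at s = 0 it is X1(pbar) + X2(qbar) - pbar. *)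

Section PartialDerivatives.
Variable R : realType.
Implicit Types (f g : pt R -> R) (x : pt R) (i : nat).

Definition coord i x : R := match i with 0 => x1 x | 1 => x2 x | _ => x3 x end.

Definition line i x (t : R) : pt R :=
  match i with 0 => (t, x2 x, x3 x) | 1 => (x1 x, t, x3 x) | _ => (x1 x, x2 x, t) end.

Lemma line_coord i x : line i x (coord i x) = x.
Proof. by case: x => [[a b] c]; case: i => [|[|i]]. Qed.

Definition has_pd i f x (d : R) := is_derive (coord i x) 1 (fun t => f (line i x t)) d.

Lemma pdE i f x : pd i f x = derive1 (fun t => f (line i x t)) (coord i x).
Proof. by case: i => [|[|i]]. Qed.

Lemma pd_existsE i f x :
  pd_exists i f x = derivable (fun t => f (line i x t)) (coord i x) 1.
Proof. by case: i => [|[|i]]. Qed.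

Lemma has_pdE i f x d : has_pd i f x d -> pd i f x = d.
Proof. by rewrite pdE derive1E => fd; apply: derive_val. Qed.

Lemma pd_existsP i f x : pd_exists i f x -> has_pd i f x (pd i f x).
Proof. by rewrite pd_existsE pdE derive1E => /derivableP. Qed.

Lemma has_pd_exists i f x d : has_pd i f x d -> pd_exists i f x.
Proof. by rewrite pd_existsE; case. Qed.

Lemma has_pd_eq i f x d d' : has_pd i f x d -> d = d' -> has_pd i f x d'.
Proof. by move=> fd <-. Qed.

Lemma has_pd_ext i f g x d : has_pd i f x d -> f =1 g -> has_pd i g x d.
Proof. by move=> fd /funext<-. Qed.

Lemma has_pd_cst i x (k : R) : has_pd i (fun _ => k) x 0.
Proof. exact: is_derive_cst. Qed.

Lemma has_pd_x1 i x : has_pd i (@x1 R) x (i == 0)%:R.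
Proof.
by case: i => [|[|i]]; rewrite /has_pd /= ?mulr1n ?mulr0n;
  [exact: is_derive_id|exact: is_derive_cst..].
Qed.

Lemma has_pdD i f g x df dg : has_pd i f x df -> has_pd i g x dg ->
  has_pd i (fun y => f y + g y) x (df + dg).
Proof. exact: is_deriveD. Qed.

Lemma has_pdM i f g x df dg : has_pd i f x df -> has_pd i g x dg ->
  has_pd i (fun y => f y * g y) x (f x * dg + g x * df).
Proof. by move=> fd gd; have := is_deriveM fd gd; rewrite line_coord. Qed.

Lemma has_pd_sqr i f x df : has_pd i f x df ->
  has_pd i (fun y => f y ^+ 2) x (2 * f x * df).
Proof.
move=> fd; apply: has_pd_eq (has_pd_ext (has_pdM fd fd) (fun y => esym (expr2 (f y)))) _.
by ring.
Qed.

Lemma has_pdV i f x df : f x != 0 -> has_pd i f x df ->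
  has_pd i (fun y => (f y)^-1) x (- df / f x ^+ 2).
Proof.
move=> fx0 fd; have fx0' : f (line i x (coord i x)) != 0 by rewrite line_coord.
have := is_deriveV fx0' fd; rewrite line_coord => fVd.
by apply: has_pd_eq fVd _; rewrite scaleNr mulNr mulrC.
Qed.

Lemma has_pd_sqrt i f x df : 0 < f x -> has_pd i f x df ->
  has_pd i (fun y => Num.sqrt (f y)) x (df / (2 * Num.sqrt (f x))).
Proof.
move=> fx_gt0 fd; have fx_gt0' : 0 < f (line i x (coord i x)) by rewrite line_coord.
apply: has_pd_eq (is_derive1_comp (is_derive1_sqrt fx_gt0') fd) _.
by rewrite line_coord mulrC.
Qed.

Lemma has_pd_div i f g x df dg : g x != 0 -> has_pd i f x df -> has_pd i g x dg ->
  has_pd i (fun y => f y / g y) x ((df * g x - f x * dg) / g x ^+ 2).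
Proof.
move=> gx_neq0 fd gd; apply: has_pd_eq (has_pdM fd (has_pdV gx_neq0 gd)) _.
by field.
Qed.

End PartialDerivatives.

Section Metric.
Variables (R : realType) (L : R) (x : pt R).
Hypotheses (L_neq0 : L != 0) (x1_neq0 : x1 x != 0).

Definition ginv_coef (k l : nat) : R :=
  let a := x1 x in
  match k, l with
  | 0, 0 => a ^+ 2
  | 1, 1 => a ^+ 2 * (1 + L^-1)
  | 1, 2 | 2, 1 => a
  | 2, 2 => 1
  | _, _ => 0
  end.

Lemma invmx_gmx : invmx (gmx L x) = \matrix_(k < 3, l < 3) ginv_coef k l.
Proof.
have gmxK : gmx L x *m (\matrix_(k < 3, l < 3) ginv_coef k l) = 1%:M.
  apply/matrixP => i j; rewrite !mxE !big_ord_recl big_ord0 !mxE /=.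
  rewrite /gL /om1 /om2 /om /ginv_coef /=.
  by case: i => [[|[|[|i]]] Hi] //=; case: j => [[|[|[|j]]] Hj] //=;
    field; rewrite ?x1_neq0 ?L_neq0.
have [gmx_unit _] := mulmx1_unit gmxK.
by rewrite -[RHS](mulKmx gmx_unit) gmxK mulmx1.
Qed.

Lemma ginvE k l : ginv L x k l = ginv_coef k l.
Proof.
rewrite /ginv invmx_gmx.
case: (@insubP _ _ 'I_3 k) => [k' _ <-|/negbTE k_ge3];
  case: (@insubP _ _ 'I_3 l) => [l' _ <-|/negbTE l_ge3]; rewrite ?mxE //.
- by case: (val k') => [|[|[|?]]]; case: l l_ge3 => [|[|[|?]]].
- by case: (val l') => [|[|[|?]]]; case: k k_ge3 => [|[|[|?]]].
- by case: l l_ge3 => [|[|[|?]]]; case: k k_ge3 => [|[|[|?]]].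
Qed.

Lemma has_pd_om1 i j :
  has_pd i (fun y => om1 y j) x (- ((i == 0) && (j == 0))%:R / x1 x ^+ 2).
Proof.
case: j => [|j].
  apply: has_pd_eq (has_pdV x1_neq0 (has_pd_x1 i x)) _.
  by case: (i == 0); rewrite /= ?oppr0 ?mul0r.
by apply: has_pd_eq (has_pd_cst i x 0) _; rewrite andbF oppr0 mul0r.
Qed.

Lemma has_pd_om i j :
  has_pd i (fun y => om y j) x (- ((i == 0) && (j == 1))%:R / x1 x ^+ 2).
Proof.
case: j => [|[|j]].
- by apply: has_pd_eq (has_pd_cst i x 0) _; rewrite andbF oppr0 mul0r.
- apply: has_pd_eq (has_pdV x1_neq0 (has_pd_x1 i x)) _.
  by case: (i == 0); rewrite /= ?oppr0 ?mul0r.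
- by apply: has_pd_eq (has_pd_cst i x (om x j.+2)) _; rewrite andbF oppr0 mul0r.
Qed.

Lemma pd_gL m j l : pd m (fun y => gL L y j l) x =
  - (m == 0)%:R / x1 x ^+ 2 *
    ((j == 0)%:R * om1 x l + (l == 0)%:R * om1 x j
     + L * ((j == 1)%:R * om x l + (l == 1)%:R * om x j)).
Proof.
apply: has_pdE; apply: has_pd_eq.
  apply: has_pdD; first apply: has_pdD.
  - exact: has_pdM (has_pd_om1 m j) (has_pd_om1 m l).
  - exact: has_pdM (has_pd_cst m x (om2 x j)) (has_pd_cst m x (om2 x l)).
  - exact: has_pdM (has_pd_cst m x L) (has_pdM (has_pd_om m j) (has_pd_om m l)).
by case: (m == 0); case: (j == 0); case: (l == 0); case: (j == 1); case: (l == 1);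
  rewrite /= ?mulr0n ?mulr1n; ring.
Qed.

Definition christoffel_coef (k i j : nat) : R :=
  let a := x1 x in
  match k, i, j with
  | 0, 0, 0 => - a^-1
  | 0, 1, 1 => L / a
  | 0, 1, 2 | 0, 2, 1 => - L / 2
  | 1, 0, 1 | 1, 1, 0 => - (L + 2) / (2 * a)
  | 1, 0, 2 | 1, 2, 0 => (L + 1) / 2
  | 2, 0, 1 | 2, 1, 0 => - L / (2 * a ^+ 2)
  | 2, 0, 2 | 2, 2, 0 => L / (2 * a)
  | _, _, _ => 0
  end.

Lemma christoffelE k i j : (k < 3)%N -> (i < 3)%N -> (j < 3)%N ->
  christoffel L x k i j = christoffel_coef k i j.
Proof.
move=> k_lt3 i_lt3 j_lt3.
rewrite /christoffel !big_ord_recl big_ord0 !ginvE !pd_gL /ginv_coef /christoffel_coef /om1 /om /=.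
move: x1_neq0; move: (x1 x) => a a_neq0.
by case: k k_lt3 => [|[|[|k]]] // _; case: i i_lt3 => [|[|[|i]]] // _;
  case: j j_lt3 => [|[|[|j]]] // _ /=; field; rewrite ?a_neq0 ?L_neq0.
Qed.

End Metric.

Section QuadraticForms.
Variables (R : comRingType) (n : nat).
Implicit Types (M A : nat -> nat -> R) (v : nat -> R).

Definition quad M v : R := \sum_(i < n) \sum_(k < n) v i * v k * M i k.

Lemma quadD M A v : quad (fun i k => M i k + A i k) v = quad M v + quad A v.
Proof.
rewrite /quad -big_split; apply: eq_bigr => i _.
by rewrite -big_split; apply: eq_bigr => k _; rewrite mulrDr.
Qed.

Lemma quad_orthonormal M f g h :
  (forall i k, (i < n)%N -> (k < n)%N -> f i * f k + g i * g k + h i * h k = (i == k)%:R) ->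
  quad M f + quad M g = \sum_(i < n) M i i - quad M h.
Proof.
move=> fgh_orthonormal; apply/eqP; rewrite eq_sym subr_eq; apply/eqP.
rewrite /quad -!big_split; apply: eq_bigr => i _ /=.
rewrite -!big_split (bigD1 i) //= big1 ?addr0 => [|k ki].
  by rewrite -!mulrDl fgh_orthonormal // eqxx mul1r.
by rewrite -!mulrDl fgh_orthonormal // val_eqE eq_sym (negbTE ki) mul0r.
Qed.

Lemma quad_mul (P Q : nat -> nat -> R) v :
  quad (fun i k => \sum_(m < n) P i m * Q m k) v =
  \sum_(m < n) (\sum_(i < n) v i * P i m) * (\sum_(k < n) v k * Q m k).
Proof.
rewrite /quad [RHS](eq_bigr (fun m : 'I_n =>
  \sum_(i < n) \sum_(k < n) v i * v k * (P i m * Q m k))).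
  rewrite [RHS]exchange_big; apply: eq_bigr => i _; rewrite [RHS]exchange_big /=.
  by apply: eq_bigr => k _; rewrite big_distrr.
move=> m _; rewrite big_distrl; apply: eq_bigr => i _; rewrite big_distrr.
by apply: eq_bigr => k _ /=; ring.
Qed.

Lemma quad_contract (T : nat -> nat -> nat -> R) v :
  quad (fun i k => \sum_(j < n) v j * T i j k) v = \sum_(i < n) v i * quad (T i) v.
Proof.
rewrite /quad; apply: eq_bigr => i _.
transitivity (\sum_(k < n) \sum_(j < n) v i * (v j * v k * T i j k)).
  by apply: eq_bigr => k _; rewrite big_distrr; apply: eq_bigr => j _ /=; ring.
by rewrite exchange_big big_distrr; apply: eq_bigr => j _; rewrite big_distrr.
Qed.

End QuadraticForms.

Lemma quad_antisym (R : numFieldType) n (A : nat -> nat -> R) v :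
  (forall j k, A j k = - A k j) -> quad n A v = 0.
Proof.
move=> A_antisym; have quad_opp : quad n A v = - quad n A v.
  rewrite /quad [LHS]exchange_big -sumrN; apply: eq_bigr => j _; rewrite -sumrN.
  by apply: eq_bigr => k _; rewrite A_antisym mulrN [v k * _]mulrC.
apply/eqP; have /= <- := mulrn_eq0 (quad n A v) 2.
by rewrite mulr2n {2}quad_opp subrr.
Qed.

Definition vec3 (T : Type) (a b c : T) (k : nat) : T :=
  match k with 0 => a | 1 => b | _ => c end.

Lemma sum3E (V : nmodType) (F : 'I_3 -> V) :
  \sum_(i < 3) F i =
  F (Ordinal (isT : (0 < 3)%N)) + F (Ordinal (isT : (1 < 3)%N)) + F (Ordinal (isT : (2 < 3)%N)).
Proof.
by rewrite !big_ord_recl big_ord0 addr0 addrA; congr (F _ + F _ + F _); apply: val_inj.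
Qed.

Section Frame.
Variables (R : realType) (L : R).

Definition frame : nat -> vfield R := vec3 (@X1 R) (@X2 R) (X3t L).

Definition frame_field (w : nat -> pt R -> R) : vfield R :=
  vadd (vadd (vscale (w 0%N) (@X1 R)) (vscale (w 1%N) (@X2 R))) (vscale (w 2%N) (X3t L)).

(* <nabla_(E i) (E j), E k> for the frame E = (X1, X2, X3/c), c = sqrt L, by Koszul's formula
   from [E0, E1] = c E2, [E0, E2] = E2 and [E1, E2] = 0. *)
Definition conn (i j k : nat) : R :=
  let c := Num.sqrt L in
  match i, j, k with
  | 0, 1, 2 | 1, 2, 0 | 2, 1, 0 => c / 2
  | 0, 2, 1 | 1, 0, 2 | 2, 0, 1 => - c / 2
  | 2, 2, 0 => 1
  | 2, 0, 2 => -1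
  | _, _, _ => 0
  end.

Lemma conn_antisym i j k : conn i j k = - conn i k j.
Proof.
by case: i => [|[|[|i]]]; case: j => [|[|[|j]]]; case: k => [|[|[|k]]];
  rewrite /conn /= ?oppr0 ?opprK ?mulNr ?opprK.
Qed.

Lemma conn_trace j : \sum_(i < 3) conn i j i = - (j == 0)%:R.
Proof.
rewrite !big_ord_recl big_ord0 /conn /=.
by case: j => [|[|[|j]]] /=; rewrite ?oppr0; ring.
Qed.

Definition nabla_frame (w : nat -> pt R -> R) (x : pt R) (i k : nat) : R :=
  vder (frame i) (w k) x + \sum_(j < 3) w j x * conn i j k.

Variables (x : pt R) (w : nat -> pt R -> R).
Hypotheses (L_gt0 : 0 < L) (x1_neq0 : x1 x != 0).
Hypothesis w_pd : forall i k, pd_exists i (w k) x.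

Lemma pd_frame_field i k : (k < 3)%N ->
  pd i (fun y => frame_field w y k) x =
  match k with
  | 0 => x1 x * pd i (w 0%N) x + w 0%N x * (i == 0)%:R
  | 1 => x1 x * (pd i (w 1%N) x + (Num.sqrt L)^-1 * pd i (w 2%N) x)
         + (w 1%N x + (Num.sqrt L)^-1 * w 2%N x) * (i == 0)%:R
  | _ => pd i (w 1%N) x
  end.
Proof.
have w_has_pd k' := pd_existsP (w_pd i k').
have x1_has_pd := has_pd_x1 i x.
case: k => [|[|[|k]]] // _; apply: has_pdE.
- apply: has_pd_eq (has_pd_ext (has_pdM (w_has_pd 0%N) x1_has_pd) _) _ => [y|].
    by rewrite /frame_field /X3t /vadd /vscale /X3 /=; ring.
  by rewrite /=; ring.
- apply: has_pd_eq (has_pd_ext (has_pdD (has_pdM (w_has_pd 1%N) x1_has_pd)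
    (has_pdM (has_pd_cst i x (Num.sqrt L)^-1) (has_pdM (w_has_pd 2%N) x1_has_pd))) _) _ => [y|].
    by rewrite /frame_field /X3t /vadd /vscale /X3 /=; ring.
  by rewrite /=; ring.
- apply: has_pd_ext (w_has_pd 1%N) _ => y.
  by rewrite /frame_field /X3t /vadd /vscale /X3 /=; ring.
Qed.

Lemma ginner_nabla_frame (V : vfield R) (f : nat -> R) :
  (forall i, V x i = \sum_(k < 3) f k * frame k x i) ->
  ginner L x (nablaL L V (frame_field w) x) (V x) = quad 3 (nabla_frame w x) f.
Proof.
move=> V_frame; have L_neq0 : L != 0 by rewrite gt_eqF.
rewrite /ginner /nablaL /quad /nabla_frame /vder !sum3E /=.
rewrite !V_frame !sum3E /= !christoffelE // !pd_frame_field //.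
rewrite /christoffel_coef /conn /gL /om1 /om2 /om /frame /vec3 /frame_field /X3t.
rewrite /vadd /vscale /X1 /X2 /X3 /=.
have [c c_gt0 L_sq] : exists2 c, 0 < c & L = c ^+ 2.
  by exists (Num.sqrt L); rewrite ?sqrtr_gt0 ?sqr_sqrtr ?ltW.
rewrite L_sq sqrtr_sqr gtr0_norm //.
move: (pd 0 (w 0%N) x) (pd 1 (w 0%N) x) (pd 2 (w 0%N) x) (pd 0 (w 1%N) x) (pd 1 (w 1%N) x)
  (pd 2 (w 1%N) x) (pd 0 (w 2%N) x) (pd 1 (w 2%N) x) (pd 2 (w 2%N) x) => ? ? ? ? ? ? ? ? ?.
move: (w 0%N x) (w 1%N x) (w 2%N x) (f 0%N) (f 1%N) (f 2%N) => ? ? ? ? ? ?.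
by field; rewrite x1_neq0 gt_eqF.
Qed.

Lemma quad_nabla_frame_unit :
  (forall m, \sum_(k < 3) w k x * pd m (w k) x = 0) ->
  quad 3 (nabla_frame w x) (fun k => w k x) = 0.
Proof.
move=> w_unit; rewrite /nabla_frame quadD /vder quad_contract.
rewrite (quad_mul 3 (fun i m => frame i x m) (fun m k => pd m (w k) x)).
rewrite !big1 ?addr0 // => [i _|m _]; last by rewrite w_unit mulr0.
by rewrite quad_antisym ?mulr0 // => j k; exact: conn_antisym.
Qed.

Lemma nabla_frame_trace :
  \sum_(i < 3) nabla_frame w x i i = \sum_(i < 3) vder (frame i) (w i) x - w 0%N x.
Proof.
rewrite /nabla_frame big_split /=; congr (_ + _); rewrite exchange_big /=.
under eq_bigr => j _ do rewrite -big_distrr conn_trace.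
by rewrite sum3E /=; ring.
Qed.

Lemma ginner_nabla_orthonormal_frame (V W : vfield R) (f g : nat -> R) :
  (forall i, V x i = \sum_(k < 3) f k * frame k x i) ->
  (forall i, W x i = \sum_(k < 3) g k * frame k x i) ->
  (forall i k, (i < 3)%N -> (k < 3)%N -> f i * f k + g i * g k + w i x * w k x = (i == k)%:R) ->
  (forall m, \sum_(k < 3) w k x * pd m (w k) x = 0) ->
  ginner L x (nablaL L V (frame_field w) x) (V x)
  + ginner L x (nablaL L W (frame_field w) x) (W x) =
  \sum_(i < 3) vder (frame i) (w i) x - w 0%N x.
Proof.
move=> V_frame W_frame fgw_on w_unit.
rewrite (ginner_nabla_frame V_frame) (ginner_nabla_frame W_frame) (quad_orthonormal _ fgw_on).
by rewrite quad_nabla_frame_unit // subr0 nabla_frame_trace.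
Qed.

End Frame.

Lemma vec3_orthonormal (R : comRingType) (pb qb lam r : R) :
  pb ^+ 2 + qb ^+ 2 = 1 -> lam ^+ 2 + r ^+ 2 = 1 ->
  forall i k, (i < 3)%N -> (k < 3)%N ->
    vec3 qb (- pb) 0 i * vec3 qb (- pb) 0 k
    + vec3 (r * pb) (r * qb) (- lam) i * vec3 (r * pb) (r * qb) (- lam) k
    + vec3 (pb * lam) (qb * lam) r i * vec3 (pb * lam) (qb * lam) r k = (i == k)%:R.
Proof.
move=> pq_unit lr_unit.
have lincomb a b c d :
    a - b = c * (pb ^+ 2 + qb ^+ 2 - 1) + d * (lam ^+ 2 + r ^+ 2 - 1) -> a = b.
  by rewrite pq_unit lr_unit !subrr !mulr0 addr0 => /subr0_eq.
move=> [|[|[|i]]] [|[|[|k]]] // _ _ /=.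
- by apply: (lincomb _ _ 1 (pb ^+ 2)); ring.
- by apply: (lincomb _ _ 0 (pb * qb)); ring.
- by ring.
- by apply: (lincomb _ _ 0 (pb * qb)); ring.
- by apply: (lincomb _ _ 1 (qb ^+ 2)); ring.
- by ring.
- by ring.
- by ring.
- by apply: (lincomb _ _ 0 1); ring.
Qed.

Section VectorFieldDerivatives.
Variables (R : realType) (x : pt R).

Lemma vderE (V : vfield R) (F : pt R -> R) y :
  vder V F y = V y 0%N * pd 0 F y + V y 1%N * pd 1 F y + V y 2%N * pd 2 F y.
Proof. by rewrite /vder sum3E. Qed.

Lemma pd_exists_vder i (V : vfield R) (F : pt R -> R) :
  (forall m, pd_exists i (fun y => V y m) x) -> (forall m, (m < 3)%N -> pd_exists i (pd m F) x) ->
  pd_exists i (vder V F) x.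
Proof.
move=> V_pd F_pd2; have V_has_pd m := pd_existsP (V_pd m).
have F_has_pd m (m_lt3 : (m < 3)%N) := pd_existsP (F_pd2 m m_lt3).
apply: has_pd_exists (has_pd_ext (has_pdD (has_pdD
  (has_pdM (V_has_pd 0%N) (F_has_pd 0%N isT)) (has_pdM (V_has_pd 1%N) (F_has_pd 1%N isT)))
  (has_pdM (V_has_pd 2%N) (F_has_pd 2%N isT))) _) => y.
by rewrite /vder sum3E.
Qed.

Lemma pd_exists_X1 i m : pd_exists i (fun y => @X1 R y m) x.
Proof. by case: m => [|m]; apply: has_pd_exists; [exact: has_pd_x1|exact: has_pd_cst]. Qed.

Lemma pd_exists_X2 i m : pd_exists i (fun y => @X2 R y m) x.
Proof.
by case: m => [|[|[|m]]]; apply: has_pd_exists; solve [exact: has_pd_x1|exact: has_pd_cst].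
Qed.

Lemma pd_exists_X3 i m : pd_exists i (fun y => @X3 R y m) x.
Proof. by case: m => [|[|m]]; apply: has_pd_exists; solve [exact: has_pd_x1|exact: has_pd_cst]. Qed.

Lemma vderZl (k : R) (V : vfield R) (F : pt R -> R) y :
  vder (vscale (fun=> k) V) F y = k * vder V F y.
Proof. by rewrite /vder mulr_sumr; apply: eq_bigr => m _; rewrite /vscale mulrA. Qed.

Lemma vderZr (k : R) (V : vfield R) (G : pt R -> R) : (forall m, pd_exists m G x) ->
  vder V (fun y => k * G y) x = k * vder V G x.
Proof.
move=> G_pd; rewrite /vder mulr_sumr; apply: eq_bigr => m _.
rewrite (has_pdE (has_pdM (has_pd_cst m x k) (pd_existsP (G_pd m)))); ring.
Qed.

End VectorFieldDerivatives.

Definition norm3 (R : realType) (f g h : pt R -> R) (y : pt R) : R :=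
  Num.sqrt (f y ^+ 2 + g y ^+ 2 + h y ^+ 2).

Section Normalization.
Variables (R : realType) (f g h : pt R -> R) (x : pt R).
Hypothesis fgh_gt0 : 0 < f x ^+ 2 + g x ^+ 2 + h x ^+ 2.

Lemma norm3_gt0 : 0 < norm3 f g h x.
Proof. by rewrite sqrtr_gt0. Qed.

Lemma has_pd_norm3 i df dg dh :
  has_pd i f x df -> has_pd i g x dg -> has_pd i h x dh ->
  has_pd i (norm3 f g h) x ((f x * df + g x * dg + h x * dh) / norm3 f g h x).
Proof.
move=> fd gd hd; apply: has_pd_eq (has_pd_sqrt fgh_gt0
  (has_pdD (has_pdD (has_pd_sqr fd) (has_pd_sqr gd)) (has_pd_sqr hd))) _.
by rewrite -/(norm3 f g h x); field; rewrite gt_eqF ?norm3_gt0.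
Qed.

Hypotheses (f_pd : forall i, pd_exists i f x) (g_pd : forall i, pd_exists i g x)
  (h_pd : forall i, pd_exists i h x).

Lemma pd_exists_normalized (F : pt R -> R) i : pd_exists i F x ->
  pd_exists i (fun y => F y / norm3 f g h y) x.
Proof.
move=> /pd_existsP F_has_pd; apply: has_pd_exists.
exact: (has_pd_div (lt0r_neq0 norm3_gt0) F_has_pd
  (has_pd_norm3 (pd_existsP (f_pd i)) (pd_existsP (g_pd i)) (pd_existsP (h_pd i)))).
Qed.

Lemma normalized_pd_orthogonal i :
  f x / norm3 f g h x * pd i (fun y => f y / norm3 f g h y) x
  + g x / norm3 f g h x * pd i (fun y => g y / norm3 f g h y) x
  + h x / norm3 f g h x * pd i (fun y => h y / norm3 f g h y) x = 0.
Proof.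
have n_has_pd := has_pd_norm3 (pd_existsP (f_pd i)) (pd_existsP (g_pd i)) (pd_existsP (h_pd i)).
have n_neq0 : norm3 f g h x != 0 := lt0r_neq0 norm3_gt0.
rewrite !(has_pdE (has_pd_div n_neq0 (pd_existsP _) n_has_pd)) //.
have n_sq : norm3 f g h x ^+ 2 = f x ^+ 2 + g x ^+ 2 + h x ^+ 2 by rewrite sqr_sqrtr ?ltW.
move: n_neq0 n_sq; move: (norm3 f g h x) => n n_neq0 n_sq.
transitivity ((f x * pd i f x + g x * pd i g x + h x * pd i h x) / n ^+ 4
              * (n ^+ 2 - (f x ^+ 2 + g x ^+ 2 + h x ^+ 2))); first by field.
by rewrite n_sq subrr mulr0.
Qed.

End Normalization.

Lemma rrE (R : realType) (u : pt R -> R) (L : R) :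
  rr u L = fun y => (Num.sqrt L)^-1 * vder (@X3 R) u y.
Proof. by apply/funext => y; rewrite /rr /X3t vderZl. Qed.

Section NormalDivergence.
Variables (R : realType) (u : pt R -> R) (L : R) (x : pt R).
Hypotheses (L_gt0 : 0 < L) (x1_gt0 : 0 < x1 x).
Hypothesis u_pd2 : forall i j, (j < 3)%N -> pd_exists i (pd j u) x.
Hypothesis ll_neq0 : ll u x != 0.

Lemma pd_exists_pp i : pd_exists i (pp u) x.
Proof. exact: pd_exists_vder (pd_exists_X1 x i) (u_pd2 i). Qed.

Lemma pd_exists_qq i : pd_exists i (qq u) x.
Proof. exact: pd_exists_vder (pd_exists_X2 x i) (u_pd2 i). Qed.

Lemma pd_exists_vder_X3 i : pd_exists i (vder (@X3 R) u) x.
Proof. exact: pd_exists_vder (pd_exists_X3 x i) (u_pd2 i). Qed.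

Lemma pd_exists_rr i : pd_exists i (rr u L) x.
Proof.
rewrite rrE; apply: has_pd_exists.
exact: has_pdM (has_pd_cst i x _) (pd_existsP (pd_exists_vder_X3 i)).
Qed.

Lemma ll_sq : ll u x ^+ 2 = pp u x ^+ 2 + qq u x ^+ 2.
Proof. by rewrite sqr_sqrtr // addr_ge0 ?sqr_ge0. Qed.

Lemma lL_sq : lL u L x ^+ 2 = pp u x ^+ 2 + qq u x ^+ 2 + rr u L x ^+ 2.
Proof. by rewrite sqr_sqrtr // !addr_ge0 ?sqr_ge0. Qed.

Lemma pp_qq_sq_gt0 : 0 < pp u x ^+ 2 + qq u x ^+ 2.
Proof. by rewrite -ll_sq exprn_gt0 // lt0r ll_neq0 sqrtr_ge0. Qed.

Lemma lL_sq_gt0 : 0 < pp u x ^+ 2 + qq u x ^+ 2 + rr u L x ^+ 2.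
Proof. by have := pp_qq_sq_gt0; have := sqr_ge0 (rr u L x); lra. Qed.

Lemma meanH_divergence :
  meanH u L x = vder (@X1 R) (pbarL u L) x + vder (@X2 R) (qbarL u L) x
                + vder (X3t L) (rbarL u L) x - pbarL u L x.
Proof.
pose w := vec3 (pbarL u L) (qbarL u L) (rbarL u L).
have fgh_pd := pd_exists_normalized lL_sq_gt0 pd_exists_pp pd_exists_qq pd_exists_rr.
have w_pd i k : pd_exists i (w k) x.
  by case: k => [|[|k]]; rewrite /w /=; apply: fgh_pd;
    [exact: pd_exists_pp|exact: pd_exists_qq|exact: pd_exists_rr].
have w_unit m : \sum_(k < 3) w k x * pd m (w k) x = 0.
  rewrite sum3E.
  exact: normalized_pd_orthogonal lL_sq_gt0 pd_exists_pp pd_exists_qq pd_exists_rr m.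
have lL_neq0 : lL u L x != 0 by rewrite gt_eqF ?sqrtr_gt0 ?lL_sq_gt0.
pose lam := ll u x / lL u L x.
have w_x j : w j x = vec3 (pbar u x * lam) (qbar u x * lam) (rbarL u L x) j.
  by case: j => [|[|j]] //=; rewrite /pbarL /qbarL /pbar /qbar /lam;
    field; rewrite ll_neq0 lL_neq0.
have pq_unit : pbar u x ^+ 2 + qbar u x ^+ 2 = 1.
  by rewrite !expr_div_n -mulrDl -ll_sq divff // expf_neq0.
have lr_unit : lam ^+ 2 + rbarL u L x ^+ 2 = 1.
  by rewrite !expr_div_n -mulrDl ll_sq -lL_sq divff // expf_neq0.
have e1_frame i : e1 u x i = \sum_(k < 3) vec3 (qbar u x) (- pbar u x) 0 k * frame L k x i.
  by rewrite sum3E /e1 /vadd /vscale /=; ring.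
have e2_frame i : e2 u L x i =
    \sum_(k < 3)
      vec3 (rbarL u L x * pbar u x) (rbarL u L x * qbar u x) (- lam) k * frame L k x i.
  by rewrite sum3E /e2 /vadd /vscale /lam /=; ring.
have := ginner_nabla_orthonormal_frame L_gt0 (lt0r_neq0 x1_gt0) w_pd e1_frame e2_frame _ w_unit.
rewrite sum3E /=; apply.
by move=> i k i_lt3 k_lt3; rewrite !w_x; exact: vec3_orthonormal.
Qed.

End NormalDivergence.

Ltac cvg_rational := repeat first
  [ assumption | exact: cvg_cst | exact: cvg_id
  | apply: cvgD | apply: cvgB | apply: cvgN | apply: cvgM
  | apply: cvgV; [by rewrite ?mulf_neq0|] ].

Section Limit.
Variables (R : realType) (u : pt R -> R) (x : pt R).
Hypotheses (x1_gt0 : 0 < x1 x) (u_pd2 : forall i j, (j < 3)%N -> pd_exists i (pd j u) x).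
Hypothesis ll_neq0 : ll u x != 0.

Definition ell (s : R) : pt R -> R := norm3 (pp u) (qq u) (fun y => s * vder (@X3 R) u y).

Lemma lL_ell L : lL u L = ell (Num.sqrt L)^-1.
Proof. by rewrite /lL rrE. Qed.

Lemma ll_ell : ll u = ell 0.
Proof. by apply/funext => y; rewrite /ell /norm3 mul0r expr0n addr0. Qed.

Lemma ell_sq_gt0 s : 0 < pp u x ^+ 2 + qq u x ^+ 2 + (s * vder (@X3 R) u x) ^+ 2.
Proof. by have := pp_qq_sq_gt0 ll_neq0; have := sqr_ge0 (s * vder (@X3 R) u x); lra. Qed.

Lemma ell_cvg0 : (fun s => ell s x) @ 0 --> ell 0 x.
Proof.
apply: (continuous_cvg _ (@sqrt_continuous _ _)); rewrite !expr2; cvg_rational.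
Qed.

Lemma pd_exists_scaled_vder_X3 s i : pd_exists i (fun y => s * vder (@X3 R) u y) x.
Proof.
exact: has_pd_exists (has_pdM (has_pd_cst i x s) (pd_existsP (pd_exists_vder_X3 u_pd2 i))).
Qed.

Lemma cvg_pd_div_ell m (F : pt R -> R) : pd_exists m F x ->
  (fun s => pd m (fun y => F y / ell s y) x) @ 0 --> pd m (fun y => F y / ell 0 y) x.
Proof.
move=> /pd_existsP F_has_pd.
have ell_has_pd s := has_pd_norm3 (ell_sq_gt0 s) (pd_existsP (pd_exists_pp u_pd2 m))
  (pd_existsP (pd_exists_qq u_pd2 m))
  (has_pdM (has_pd_cst m x s) (pd_existsP (pd_exists_vder_X3 u_pd2 m))).
have ell_neq0 s : ell s x != 0 := lt0r_neq0 (norm3_gt0 (ell_sq_gt0 s)).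
have pd_div_ell s := has_pdE (has_pd_div (ell_neq0 s) F_has_pd (ell_has_pd s)).
have ell0_neq0 := ell_neq0 0; have ell_cvg := ell_cvg0.
rewrite (funext pd_div_ell) pd_div_ell !expr2; cvg_rational.
Qed.

Lemma cvg_vder_div_ell (V : vfield R) (F : pt R -> R) : (forall m, pd_exists m F x) ->
  (fun s => vder V (fun y => F y / ell s y) x) @ 0 --> vder V (fun y => F y / ell 0 y) x.
Proof.
move=> F_pd; rewrite (funext (fun s => vderE V _ x)) vderE.
by apply: cvgD; [apply: cvgD|]; apply: cvgM; solve [exact: cvg_cst|exact: cvg_pd_div_ell].
Qed.

Definition normal_div (s : R) : R :=
  vder (@X1 R) (fun y => pp u y / ell s y) x + vder (@X2 R) (fun y => qq u y / ell s y) x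
  + s * vder (@X3 R) (fun y => s * vder (@X3 R) u y / ell s y) x - pp u x / ell s x.

Lemma meanH_normal_div L : 0 < L -> meanH u L x = normal_div (Num.sqrt L)^-1.
Proof.
by move=> L_gt0; rewrite meanH_divergence // /pbarL /qbarL /rbarL lL_ell /X3t vderZl rrE.
Qed.

Lemma normal_div0 : normal_div 0 = vder (@X1 R) (pbar u) x + vder (@X2 R) (qbar u) x - pbar u x.
Proof. by rewrite /normal_div mul0r addr0 -ll_ell. Qed.

Lemma normal_div_cvg0 : normal_div s @[s --> 0] --> normal_div 0.
Proof.
have C_pd m := pd_exists_vder_X3 u_pd2 m.
have normal_div_factor s : normal_div s = vder (@X1 R) (fun y => pp u y / ell s y) x
    + vder (@X2 R) (fun y => qq u y / ell s y) x
    + s * (s * vder (@X3 R) (fun y => vder (@X3 R) u y / ell s y) x) - pp u x / ell s x.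
  rewrite -vderZr => [|m]; last first.
    exact: (pd_exists_normalized (h := fun y => s * vder (@X3 R) u y) (ell_sq_gt0 s)
      (pd_exists_pp u_pd2) (pd_exists_qq u_pd2) (pd_exists_scaled_vder_X3 s) (C_pd m)).
  rewrite /normal_div.
  suff -> : (fun y => s * vder (@X3 R) u y / ell s y) =
            (fun y => s * (vder (@X3 R) u y / ell s y)) by [].
  by apply/funext => y; rewrite mulrA.
rewrite (funext normal_div_factor) /=.
have ell0_neq0 : ell 0 x != 0 := lt0r_neq0 (norm3_gt0 (ell_sq_gt0 0)).
apply: cvgB; last by apply: cvgM; [exact: cvg_cst|exact: cvgV ell0_neq0 ell_cvg0].
apply: cvgD.
  by apply: cvgD; apply: cvg_vder_div_ell; [exact: pd_exists_pp|exact: pd_exists_qq].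
by apply: cvgM; [exact: cvg_id|apply: cvgM; [exact: cvg_id|exact: cvg_vder_div_ell C_pd]].
Qed.

End Limit.

Lemma inv_sqrt_cvg0 (R : realType) : (Num.sqrt L)^-1 @[L --> +oo] --> (0 : R).
Proof.
apply/cvgr0Pnorm_lt => e e_gt0; near=> L.
have e2L : e^-2 < L by near: L; apply: nbhs_pinfty_gt; rewrite num_real.
have L_gt0 : 0 < L by apply: lt_trans e2L; rewrite invr_gt0 exprn_gt0.
rewrite normfV ger0_norm ?sqrtr_ge0 // -[e in _ < e]invrK ltf_pV2 ?posrE ?sqrtr_gt0 ?invr_gt0 //.
have : Num.sqrt (e^-1 ^+ 2) < Num.sqrt L by rewrite ltr_sqrt // exprVn.
by rewrite sqrtr_sqr gtr0_norm // invr_gt0.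
Unshelve. all: by end_near.
Qed.

Theorem proposition3p8 (R : realType) (u : pt R -> R) :
  regular_surface u ->
  forall x : pt R, surf u x -> ll u x != 0 ->
    (fun L : R => meanH u L x) @ +oo -->
      vder (@X1 R) (pbar u) x + vder (@X2 R) (qbar u) x - pbar u x.
Proof.
move=> [[_ u_C2] _] x [x1_gt0 _] ll_neq0.
have u_pd2 i j (j_lt3 : (j < 3)%N) : pd_exists i (pd j u) x.
  have [_ pd_u_C1] := u_C2 j j_lt3 x x1_gt0.
  by case: i => [|[|i]];
    [exact: (pd_u_C1 0%N isT).1|exact: (pd_u_C1 1%N isT).1|exact: (pd_u_C1 2%N isT).1].
rewrite -normal_div0.
apply: cvg_trans (cvg_comp _ _ (@inv_sqrt_cvg0 R) (normal_div_cvg0 u_pd2 ll_neq0)).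
apply: near_eq_cvg; near=> L; apply: esym; apply: (meanH_normal_div x1_gt0 u_pd2 ll_neq0).
by near: L; apply: nbhs_pinfty_gt; rewrite num_real.
Unshelve. all: by end_near.
Qed.
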